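(* Let $\beta$ be a real root of an irreducible quadratic polynomial with integer coefficients, and let $\beta'$ denote its other root (conjugate). Then $p_\beta(\alpha) < \infty$ for every $\alpha \in \mathbb{R}$ if and only if at least one of $\beta$ and $\beta'$ is greater than $1$.
   Context: For $\beta, \alpha \in \mathbb{C}$, the partition function $p_\beta(\alpha) \in \mathbb{Z}_{\geq 0} \cup \{\infty\}$ is the number of polynomials $f(x) \in \mathbb{Z}_{\geq 0}[x]$ (polynomials with non-negative integer coefficients) such that $f(\beta) = \alpha$, i.e. the number of ways to write $\alpha = a_j\beta^j + \dots + a_1\beta + a_0$ with non-negative integers $a_i$; it may be infinite. *)

From HB Require Import structures.
From mathcomp Require Import all_boot all_order all_algebra.
From mathcomp Require Import all_classical all_reals.
Set Implicit Arguments. Unset Strict Implicit. Unset Printing Implicit Defensive.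
Import Order.TTheory GRing.Theory Num.Theory.
Local Open Scope ring_scope.

Definition nonneg_poly (f : {poly int}) : Prop := forall i : nat, 0 <= f`_i.

Definition evalR (R : realType) (f : {poly int}) (x : R) : R :=
  (map_poly (fun z : int => z%:~R) f).[x].

(* p_beta(alpha) < oo : the set of f in Z_{>=0}[x] with f(beta) = alpha is
   finite, i.e. contained in some finite list. *)
Definition partition_finite (R : realType) (beta alpha : R) : Prop :=
  exists s : seq {poly int},
    forall f : {poly int}, nonneg_poly f -> evalR f beta = alpha -> f \in s.

From HB Require Import structures.
From mathcomp Require Import all_boot all_order all_algebra.
From mathcomp Require Import all_classical all_reals.
From mathcomp Require Import normedtype sequences.
From mathcomp Require Import ring lra zify.
Set Implicit Arguments. Unset Strict Implicit. Unset Printing Implicit Defensive.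
Import Order.TTheory GRing.Theory Num.Theory.
Local Open Scope ring_scope.

(** If a conjugate [g] exceeds 1, a representation [f(g) = a] bounds both the
    coefficients of [f] (each is at most [a]) and its degree (as [g^deg f <= a]), so
    there are finitely many.  Since [beta] is a quadratic irrational, [(1, beta)] is
    a [Q]-basis of [Q(beta)]; hence [f(beta) = f0(beta)] forces [f(beta') = f0(beta')],
    and finiteness passes from [beta'] to [beta].

    Conversely, let both conjugates be [< 1] (they are never [0] or [1]).  It suffices
    to find nonnegative [G <> 0], [H] and [j > 0] with [G(beta) = beta^j G(beta) + H(beta)]:
    iterating [f |-> X^j f + H] from [G] then yields representations of [G(beta)] of
    unbounded degree.  If both conjugates are negative, [q] itself has coefficients of
    one sign and [H = 0].  Otherwise we find an identity
    [G0(b) (1 - b^j) = lam b^i1 + mu b^i2] with [lam, mu > 0], valid at both conjugates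
    [b]; such [lam, mu] are automatically rational, so clearing denominators gives
    [G] and [H].  With [r] the positive conjugate and [s] the other one, the choices
    are [X^2a (1 - X) = lam + mu X^2a] if [|s| < r],
    [1 - X = lam X^2a + mu X^(2a+1)] if [|s| > r], and
    [(1 + X)(1 - X^2) = (1 - r^2)(1 + X)] if [s = -r], where [a] is large enough for the
    even powers of the smaller conjugate to be negligible. *)

Section Evaluation.
Variable R : realType.
Implicit Types (p r : {poly int}) (x : R).

Lemma evalRD p r x : evalR (p + r) x = evalR p x + evalR r x.
Proof. by rewrite /evalR rmorphD hornerD. Qed.

Lemma evalRN p x : evalR (- p) x = - evalR p x.
Proof. by rewrite /evalR rmorphN hornerN. Qed.

Lemma evalRB p r x : evalR (p - r) x = evalR p x - evalR r x.
Proof. by rewrite evalRD evalRN. Qed.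

Lemma evalRM p r x : evalR (p * r) x = evalR p x * evalR r x.
Proof. by rewrite /evalR rmorphM hornerM. Qed.

Lemma evalRC c x : evalR c%:P x = c%:~R.
Proof. by rewrite /evalR map_polyC hornerC. Qed.

Lemma evalR1 x : evalR 1 x = 1.
Proof. by rewrite -polyC1 evalRC. Qed.

Lemma evalRX x : evalR 'X x = x.
Proof. by rewrite /evalR map_polyX hornerX. Qed.

Lemma evalRXn n x : evalR 'X^n x = x ^+ n.
Proof. by rewrite /evalR map_polyXn hornerXn. Qed.

Definition evalRE := (evalRD, evalRB, evalRN, evalRM, evalRC, evalR1, evalRX, evalRXn).

Lemma evalR_ratr p x :
  evalR p x = (map_poly (ratr : rat -> R) (map_poly (fun z : int => z%:~R) p)).[x].
Proof.
by rewrite /evalR -map_poly_comp; congr horner; apply: eq_map_poly => z /=; rewrite ratr_int.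
Qed.

Lemma evalR_sum p x : evalR p x = \sum_(i < size p) (p`_i)%:~R * x ^+ i.
Proof.
rewrite /evalR (@horner_coef_wide _ (size p)); last first.
  by rewrite size_map_inj_poly //; exact: intr_inj.
by apply: eq_bigr => i _; rewrite coef_map.
Qed.

End Evaluation.

Lemma nonneg_polyD (p r : {poly int}) : nonneg_poly p -> nonneg_poly r -> nonneg_poly (p + r).
Proof. by move=> p_ge0 r_ge0 i; rewrite coefD addr_ge0. Qed.

Lemma nonneg_polyM (p r : {poly int}) : nonneg_poly p -> nonneg_poly r -> nonneg_poly (p * r).
Proof. by move=> p_ge0 r_ge0 i; rewrite coefM sumr_ge0 // => j _; rewrite mulr_ge0. Qed.

Lemma nonneg_polyC c : 0 <= c -> nonneg_poly c%:P.
Proof. by move=> c_ge0 i; rewrite coefC; case: eqP. Qed.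

Lemma nonneg_polyXn n : nonneg_poly 'X^n.
Proof. by move=> i; rewrite coefXn; case: eqP. Qed.

Lemma lead_coef_nonneg_gt0 (p : {poly int}) : nonneg_poly p -> p != 0 -> 0 < lead_coef p.
Proof. by move=> p_ge0 p_neq0; rewrite lt_def lead_coef_eq0 p_neq0 lead_coefE p_ge0. Qed.

Lemma coef_expr_le_evalR (R : realType) (p : {poly int}) (x : R) i :
  nonneg_poly p -> 0 <= x -> (p`_i)%:~R * x ^+ i <= evalR p x.
Proof.
move=> p_ge0 x_ge0; rewrite evalR_sum.
have term_ge0 j : 0 <= (p`_j)%:~R * x ^+ j :> R by rewrite mulr_ge0 ?exprn_ge0 ?ler0z.
have [i_lt|i_ge] := ltnP i (size p); last first.
  by rewrite nth_default // mul0r sumr_ge0.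
by rewrite (bigD1 (Ordinal i_lt)) //= lerDl sumr_ge0.
Qed.

Section Powers.
Variable R : realType.

Lemma exists_expr_lt (r e : R) : 0 <= r < 1 -> 0 < e -> exists n : nat, r ^+ n < e.
Proof.
move=> /andP[r_ge0 r_lt1] e_gt0.
have r_norm_lt1 : `|r| < 1 by rewrite ger0_norm.
have [N _ rN] := @cvgr0_norm_lt R R^o _ _ _ _ (cvg_expr r_norm_lt1) e e_gt0.
by exists N; have := rN N (leqnn N); rewrite /= ger0_norm ?exprn_ge0.
Qed.

Lemma exists_expr_gt (g C : R) : 1 < g -> exists n : nat, C < g ^+ n.
Proof.
move=> g_gt1; have g_gt0 : 0 < g by rewrite (lt_trans ltr01).
have C1_gt0 : 0 < `|C| + 1 by rewrite ltr_wpDl.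
have gV : 0 <= g^-1 < 1 by rewrite invr_ge0 ltW // invf_lt1.
have C1V_gt0 : 0 < (`|C| + 1)^-1 by rewrite invr_gt0.
have [n gVn] := exists_expr_lt gV C1V_gt0.
exists n; rewrite exprVn ltf_pV2 ?posrE ?exprn_gt0 // in gVn.
by rewrite (le_lt_trans (ler_norm C)) // (lt_trans _ gVn) // ltrDl.
Qed.

Lemma exists_even_expr_lt (x y c : R) : x ^+ 2 < y ^+ 2 -> 0 < c ->
  exists a : nat, x ^+ (2 * a) < c * y ^+ (2 * a).
Proof.
move=> xy c_gt0.
have y_neq0 : y != 0 by apply: contraTneq xy => ->; rewrite expr0n /= ltNge sqr_ge0.
have y2_gt0 : 0 < y ^+ 2 by rewrite exprn_even_gt0.
have t_range : 0 <= x ^+ 2 / y ^+ 2 < 1 by rewrite divr_ge0 ?sqr_ge0 // ltr_pdivrMr ?mul1r.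
have [a ta] := exists_expr_lt t_range c_gt0.
by exists a; move: ta; rewrite expr_div_n ltr_pdivrMr ?exprM // exprn_gt0.
Qed.

End Powers.

Lemma bounded_polys_finite (N M : nat) : exists s : seq {poly int},
  forall p, nonneg_poly p -> (size p <= N)%N -> (forall i, p`_i <= M%:Z) -> p \in s.
Proof.
exists [seq Poly [seq (val k)%:Z | k <- t] | t : N.-tuple 'I_M.+1].
move=> p p_ge0 p_size p_le; apply/mapP.
exists [tuple inord `|p`_i| | i < N]; first by rewrite mem_enum.
apply/polyP => i; rewrite coef_Poly.
have [i_ge|i_lt] := leqP N i.
  by rewrite nth_default ?(leq_trans p_size) // nth_default // size_map size_tuple.
rewrite (nth_map ord0) ?size_tuple // -[i]/(val (Ordinal i_lt)) nth_mktuple /=.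
by rewrite inordK ?ltnS -?lez_nat abszE ger0_norm.
Qed.

Lemma partition_finite_gt1 (R : realType) (g alpha : R) : 1 < g -> partition_finite g alpha.
Proof.
move=> g_gt1; have g_ge0 : 0 <= g by rewrite ltW // (lt_trans ltr01).
have [N gN] := exists_expr_gt alpha g_gt1.
have [s s_all] := bounded_polys_finite N (Num.bound `|alpha|).
exists s => p p_ge0 p_val; apply: s_all => //.
  have [->|p_neq0] := eqVneq p 0; first by rewrite size_poly0.
  have lead_ge1 : 1 <= lead_coef p by rewrite -gtz0_ge1 lead_coef_nonneg_gt0.
  have : g ^+ (size p).-1 <= alpha.
    rewrite -p_val (le_trans _ (coef_expr_le_evalR (size p).-1 p_ge0 g_ge0)) // -lead_coefE.
    by rewrite ler_peMl ?exprn_ge0 ?ler1z.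
  apply: contraTT; rewrite -ltnNge -ltNge => N_lt.
  by rewrite (lt_le_trans gN) // ler_eXn2l // -ltnS prednK ?size_poly_gt0.
move=> i; have coef_le : (p`_i)%:~R <= alpha.
  rewrite -p_val (le_trans _ (coef_expr_le_evalR i p_ge0 g_ge0)) //.
  by rewrite ler_peMr ?ler0z ?exprn_ege1 // ltW.
rewrite -(ler_int R) ltW // (le_lt_trans coef_le) //.
exact: le_lt_trans (ler_norm alpha) (archi_boundP (normr_ge0 alpha)).
Qed.

Definition pumpable (R : realType) (b : R) : Prop :=
  exists (G H : {poly int}) (j : nat),
    [/\ nonneg_poly G, nonneg_poly H, G != 0, (0 < j)%N &
        evalR G b = b ^+ j * evalR G b + evalR H b].

Lemma size_XnMD_gt (p h : {poly int}) j : nonneg_poly p -> nonneg_poly h -> p != 0 ->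
  (0 < j)%N -> (size p < size ('X^j * p + h)%R)%N.
Proof.
move=> p_ge0 h_ge0 p_neq0 j_gt0.
have coef_gt0 : 0 < ('X^j * p + h)`_((size p).-1 + j).
  rewrite coefD coefXnM ltnNge leq_addl /= addnK.
  by rewrite ltr_wpDr // -lead_coefE lead_coef_nonneg_gt0.
have sp_gt0 : (0 < size p)%N by rewrite size_poly_gt0.
apply: (@leq_trans ((size p).-1 + j).+1); first lia.
by rewrite ltnNge; apply: contraTN coef_gt0 => /(nth_default 0) ->; rewrite ltxx.
Qed.

Lemma pumpable_partition_infinite (R : realType) (b : R) :
  pumpable b -> exists alpha, ~ partition_finite b alpha.
Proof.
move=> [G [H [j [G_ge0 H_ge0 G_neq0 j_gt0 G_fix]]]]; exists (evalR G b) => -[s s_all].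
pose pump n := iter n (fun p => 'X^j * p + H) G.
have pumpP n : [/\ nonneg_poly (pump n), evalR (pump n) b = evalR G b & (n < size (pump n))%N].
  elim: n => [|n [pn_ge0 pn_val pn_size]] /=; first by rewrite size_poly_gt0.
  have pn_neq0 : pump n != 0 by rewrite -size_poly_gt0 (leq_ltn_trans _ pn_size).
  split; first exact: nonneg_polyD (nonneg_polyM (nonneg_polyXn j) pn_ge0) H_ge0.
    by rewrite evalRD evalRM evalRXn pn_val -G_fix.
  exact: leq_ltn_trans pn_size (size_XnMD_gt pn_ge0 H_ge0 pn_neq0 j_gt0).
pose m := \max_(p <- s) size p.
have [pm_ge0 pm_val pm_size] := pumpP m.
have := @leq_bigmax_seq _ s xpredT (fun p => size p) _ (s_all _ pm_ge0 pm_val) isT.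
by rewrite leqNgt pm_size.
Qed.

Lemma pumpable_of_rat_identity (R : realType) (b : R) (G0 : {poly int}) (j i1 i2 : nat)
    (l m : rat) :
  nonneg_poly G0 -> G0 != 0 -> (0 < j)%N -> 0 < l -> 0 < m ->
  evalR G0 b * (1 - b ^+ j) = ratr l * b ^+ i1 + ratr m * b ^+ i2 -> pumpable b.
Proof.
move=> G0_ge0 G0_neq0 j_gt0 l_gt0 m_gt0 G0_id.
have dl_gt0 := denq_gt0 l; have dm_gt0 := denq_gt0 m.
exists ((denq l * denq m)%:P * G0),
  ((numq l * denq m)%:P * 'X^i1 + (numq m * denq l)%:P * 'X^i2), j; split => //.
- exact: nonneg_polyM (nonneg_polyC (ltW (mulr_gt0 dl_gt0 dm_gt0))) G0_ge0.
- apply: nonneg_polyD; apply: nonneg_polyM (nonneg_polyXn _); apply/nonneg_polyC/ltW.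
    by rewrite mulr_gt0 // numq_gt0.
  by rewrite mulr_gt0 // numq_gt0.
- by rewrite mulf_neq0 // polyC_eq0 mulf_neq0 ?denq_neq0.
have dl_neq0 : (denq l)%:~R != 0 :> R by rewrite intr_eq0 denq_neq0.
have dm_neq0 : (denq m)%:~R != 0 :> R by rewrite intr_eq0 denq_neq0.
move: G0_id; rewrite /ratr !evalRE !intrM.
set dl : R := (denq l)%:~R in dl_neq0 *; set dm : R := (denq m)%:~R in dm_neq0 *.
set nl : R := (numq l)%:~R; set nm : R := (numq m)%:~R; set g0 := evalR G0 b => G0_id.
clearbody dl dm nl nm g0.
apply/eqP; rewrite -subr_eq0; apply/eqP.
transitivity (dl * dm * (g0 * (1 - b ^+ j) - (nl / dl * b ^+ i1 + nm / dm * b ^+ i2))).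
  by field; rewrite dl_neq0 dm_neq0.
by rewrite G0_id subrr mulr0.
Qed.

Lemma affine_eq0 (K : fieldType) (c0 c1 x y : K) : x != y ->
  c0 + c1 * x = 0 -> c0 + c1 * y = 0 -> c0 = 0 /\ c1 = 0.
Proof.
move=> x_neq_y cx cy.
have c1_eq0 : c1 = 0.
  have : c1 * (x - y) = 0.
    by transitivity ((c0 + c1 * x) - (c0 + c1 * y)); [ring | rewrite cx cy subrr].
  by move/eqP; rewrite mulf_eq0 subr_eq0 (negbTE x_neq_y) orbF => /eqP.
by move: cx; rewrite c1_eq0 mul0r addr0.
Qed.

Lemma small_conj_coefs (R : realFieldType) (r s P T : R) : s < r < 1 -> 0 < T ->
  T * (1 - s) < P * (1 - r) -> exists lam mu : R,
  [/\ 0 < lam, 0 < mu, P * (1 - r) = lam + mu * P & T * (1 - s) = lam + mu * T].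
Proof.
move=> /andP[s_lt_r r_lt1] T_gt0 key.
have T_lt_P : T < P by nra.
have PT_neq0 : P - T != 0 by rewrite subr_eq0 gt_eqF.
pose mu := (P * (1 - r) - T * (1 - s)) / (P - T).
exists (P * (1 - r - mu)), mu; split.
- apply: mulr_gt0; first exact: lt_trans T_gt0 T_lt_P.
  rewrite subr_gt0 ltr_pdivrMr ?subr_gt0 // -subr_gt0.
  have -> : (1 - r) * (P - T) - (P * (1 - r) - T * (1 - s)) = T * (r - s) by ring.
  by rewrite mulr_gt0 // subr_gt0.
- by rewrite divr_gt0 ?subr_gt0.
- by rewrite /mu; field.
- by rewrite /mu; field.
Qed.

Lemma large_conj_coefs (R : realFieldType) (r s P T : R) :
  0 < r < 1 -> s < 0 -> 0 < P -> 0 < T -> P * (1 - s) < T * (1 - r) -> exists lam mu : R,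
  [/\ 0 < lam, 0 < mu, 1 - r = P * (lam + mu * r) & 1 - s = T * (lam + mu * s)].
Proof.
move=> /andP[r_gt0 r_lt1] s_lt0 P_gt0 T_gt0 key.
have D_gt0 : 0 < P * T * (r - s) by rewrite !mulr_gt0 // subr_gt0 (lt_trans s_lt0).
have D_neq0 : P * T * (r - s) != 0 by rewrite gt_eqF.
exists (((1 - s) * r * P - (1 - r) * s * T) / (P * T * (r - s))),
  (((1 - r) * T - (1 - s) * P) / (P * T * (r - s))); split.
- rewrite divr_gt0 // subr_gt0 (@lt_trans _ _ 0) //.
    by rewrite pmulr_llt0 // pmulr_rlt0 // subr_gt0.
  by rewrite !mulr_gt0 // subr_gt0 (lt_trans s_lt0).
- by rewrite divr_gt0 // subr_gt0 [(1 - s) * _]mulrC [(1 - r) * _]mulrC.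
- by field; move: D_neq0; rewrite !mulf_eq0 !negb_or => /andP[/andP[-> ->] ->].
- by field; move: D_neq0; rewrite !mulf_eq0 !negb_or => /andP[/andP[-> ->] ->].
Qed.

Lemma irredp_dvdp_of_root (F K : fieldType) (f : {rmorphism F -> K}) (p r : {poly F})
    (x : K) :
  irreducible_poly p -> root (map_poly f p) x -> root (map_poly f r) x -> p %| r.
Proof.
move=> p_irr px rx.
have [gcd_unit|gcd_p] := irredp_XsubCP p_irr (dvdp_gcdl p r); last first.
  by rewrite -(eqp_dvdl _ gcd_p) dvdp_gcdr.
have : root (map_poly f (gcdp p r)) x by rewrite gcdp_map root_gcd px rx.
by rewrite (eqp_root (_ : _ %= map_poly f 1)) ?eqp_map // rmorph1 (negPf (root1 x)).
Qed.

Section Conjugates.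
Variables (R : realType) (q : {poly int}).
Hypotheses (size_q : size q = 3%N)
  (q_irr : irreducible_poly (map_poly (fun z : int => z%:~R) q : {poly rat})).
Local Notation qQ := (map_poly (fun z : int => z%:~R) q : {poly rat}).

Let size_qQ : size qQ = 3%N.
Proof. by rewrite size_map_inj_poly //; exact: intr_inj. Qed.

Lemma ratr_affine_root_eq0 (b : R) (u v : rat) :
  evalR q b = 0 -> ratr u + ratr v * b = 0 -> u = 0 /\ v = 0.
Proof.
move=> qb uvb; pose l := Poly [:: u; v].
suff l_eq0 : l = 0.
  by split; [rewrite -[u]/([:: u; v]`_0) | rewrite -[v]/([:: u; v]`_1)];
    rewrite -coef_Poly -/l l_eq0 coef0.
apply/eqP; apply: contraT => l_neq0.
have qQ_dvd_l : qQ %| l.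
  apply: (irredp_dvdp_of_root (f := ratr) (x := b) q_irr); rewrite /root.
    by rewrite -evalR_ratr qb.
  by rewrite map_Poly /= !horner_cons horner0 mul0r add0r addrC uvb.
have := dvdp_leq l_neq0 qQ_dvd_l.
by rewrite size_qQ leqNgt (leq_ltn_trans (size_Poly _)).
Qed.

Lemma root_neq0 (b : R) : evalR q b = 0 -> b != 0.
Proof.
move=> qb; apply/eqP => b0.
have lin : ratr 0 + ratr 1 * b = 0 :> R by rewrite b0 rmorph0 mulr0 addr0.
by have [_ /eqP] := ratr_affine_root_eq0 qb lin; rewrite oner_eq0.
Qed.

Lemma root_neq1 (b : R) : evalR q b = 0 -> b != 1.
Proof.
move=> qb; apply/eqP => b1.
have lin : ratr (-1) + ratr 1 * b = 0 :> R by rewrite b1 mulr1 -rmorphD addNr rmorph0.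
by have [_ /eqP] := ratr_affine_root_eq0 qb lin; rewrite oner_eq0.
Qed.

Lemma ratr_coords (Y : {poly int}) : exists u v : rat,
  forall g : R, evalR q g = 0 -> evalR Y g = ratr u + ratr v * g.
Proof.
pose rem := map_poly (fun z : int => z%:~R) Y %% qQ.
have qQ_neq0 : qQ != 0 by rewrite -size_poly_gt0 size_qQ.
have rem_size : (size (map_poly (ratr : rat -> R) rem) <= 2)%N.
  by rewrite size_map_poly -ltnS -size_qQ ltn_modpN0.
exists rem`_0, rem`_1 => g qg.
rewrite evalR_ratr (divp_eq (map_poly _ Y) qQ) rmorphD rmorphM hornerD hornerM.
rewrite -evalR_ratr qg mulr0 add0r (horner_coef_wide _ rem_size).
by rewrite !big_ord_recl big_ord0 !coef_map /= expr0 mulr1 expr1 addr0.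
Qed.

Lemma evalR_eq_conj (F F0 : {poly int}) (b b' : R) : evalR q b = 0 -> evalR q b' = 0 ->
  evalR F b = evalR F0 b -> evalR F b' = evalR F0 b'.
Proof.
move=> qb qb' FF0_b; have [u [v coords]] := ratr_coords (F - F0).
have [u0 v0] : u = 0 /\ v = 0.
  by apply: (ratr_affine_root_eq0 qb); rewrite -coords // evalRB FF0_b subrr.
by apply/eqP; rewrite -subr_eq0 -evalRB coords // u0 v0 rmorph0 mul0r addr0.
Qed.

Lemma partition_finite_conj (b b' alpha : R) : evalR q b = 0 -> evalR q b' = 0 ->
  (forall alpha', partition_finite b' alpha') -> partition_finite b alpha.
Proof.
move=> qb qb' fin_b'.
have [[F0 [F0_ge0 F0_val]]|no_rep] := pselect (exists F0, nonneg_poly F0 /\ evalR F0 b = alpha).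
  have [s s_all] := fin_b' (evalR F0 b').
  exists s => F F_ge0 F_val; apply: s_all => //.
  by apply: (evalR_eq_conj qb qb'); rewrite F_val F0_val.
by exists [::] => F F_ge0 F_val; case: no_rep; exists F.
Qed.

Lemma rat_coefs_of_conj_identity (b1 b2 : R) (Y : {poly int}) (i1 i2 : nat) (lam mu : R) :
  evalR q b1 = 0 -> evalR q b2 = 0 -> b1 != b2 ->
  b1 ^+ i1 * b2 ^+ i2 != b1 ^+ i2 * b2 ^+ i1 ->
  evalR Y b1 = lam * b1 ^+ i1 + mu * b1 ^+ i2 ->
  evalR Y b2 = lam * b2 ^+ i1 + mu * b2 ^+ i2 ->
  exists l m : rat, lam = ratr l /\ mu = ratr m.
Proof.
move=> qb1 qb2 b12 det_neq0 Yb1 Yb2.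
have [u [v Y_coords]] := ratr_coords Y.
have [a1 [c1 X1_coords]] := ratr_coords 'X^i1.
have [a2 [c2 X2_coords]] := ratr_coords 'X^i2.
have coords_eq b : evalR q b = 0 -> evalR Y b = lam * b ^+ i1 + mu * b ^+ i2 ->
    ratr u - (lam * ratr a1 + mu * ratr a2) + (ratr v - (lam * ratr c1 + mu * ratr c2)) * b = 0.
  move=> qb; rewrite -!evalRXn X1_coords // X2_coords // Y_coords // => Yb.
  transitivity (ratr u + ratr v * b
                - (lam * (ratr a1 + ratr c1 * b) + mu * (ratr a2 + ratr c2 * b))); first ring.
  by rewrite Yb subrr.
have [/subr0_eq u_eq /subr0_eq v_eq] :=
  affine_eq0 b12 (coords_eq _ qb1 Yb1) (coords_eq _ qb2 Yb2).
(* Cramer's rule in the [Q]-basis [(1, b)]. *)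
pose D := a1 * c2 - a2 * c1.
have D_neq0 : ratr D != 0 :> R.
  apply: contraNneq det_neq0 => D0; rewrite -subr_eq0 -!evalRXn.
  rewrite !X1_coords // !X2_coords //; apply/eqP.
  transitivity (ratr D * (b2 - b1)); last by rewrite D0 mul0r.
  by rewrite /D rmorphB !rmorphM; ring.
exists ((u * c2 - v * a2) / D), ((v * a1 - u * c1) / D).
rewrite !(fmorph_div, rmorphB, rmorphM) /= u_eq v_eq.
move: D_neq0; rewrite /D rmorphB !rmorphM => D_neq0.
by split; field.
Qed.

Lemma pumpable_of_conj_identity (r s : R) (G0 : {poly int}) (j i1 i2 : nat) (lam mu : R) :
  evalR q r = 0 -> evalR q s = 0 -> r != s ->
  nonneg_poly G0 -> G0 != 0 -> (0 < j)%N -> 0 < lam -> 0 < mu ->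
  r ^+ i1 * s ^+ i2 != r ^+ i2 * s ^+ i1 ->
  (forall b, b \in [:: r; s] -> evalR G0 b * (1 - b ^+ j) = lam * b ^+ i1 + mu * b ^+ i2) ->
  pumpable r /\ pumpable s.
Proof.
move=> qr qs r_neq_s G0_ge0 G0_neq0 j_gt0 lam_gt0 mu_gt0 det_neq0 G0_id.
have Y_id b : b \in [:: r; s] ->
    evalR (G0 * (1 - 'X^j)) b = lam * b ^+ i1 + mu * b ^+ i2.
  by move=> b_rs; rewrite evalRM evalRB evalR1 evalRXn G0_id.
have r_in : r \in [:: r; s] by rewrite mem_head.
have s_in : s \in [:: r; s] by rewrite !inE eqxx orbT.
have [l [m [lam_l mu_m]]] :=
  rat_coefs_of_conj_identity qr qs r_neq_s det_neq0 (Y_id r r_in) (Y_id s s_in).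
rewrite lam_l ltr0q in lam_gt0; rewrite mu_m ltr0q in mu_gt0.
have pumpable_b b : b \in [:: r; s] -> pumpable b.
  move=> b_rs; apply: (pumpable_of_rat_identity G0_ge0 G0_neq0 j_gt0 lam_gt0 mu_gt0).
  by rewrite -lam_l -mu_m G0_id.
by split; apply: pumpable_b.
Qed.

Lemma evalR_size3 (x : R) :
  evalR q x = (q`_0)%:~R + (q`_1)%:~R * x + (q`_2)%:~R * x ^+ 2.
Proof. by rewrite evalR_sum size_q !big_ord_recl big_ord0 /= expr0 mulr1 expr1 addr0 addrA. Qed.

Lemma vieta2 (x y : R) : evalR q x = 0 -> evalR q y = 0 -> x != y ->
  (q`_1)%:~R = - (q`_2)%:~R * (x + y) /\ (q`_0)%:~R = (q`_2)%:~R * x * y.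
Proof.
rewrite !evalR_size3; set c0 : R := (q`_0)%:~R; set c1 : R := (q`_1)%:~R.
set c2 : R := (q`_2)%:~R => qx qy x_neq_y.
have c1_eq : c1 = - c2 * (x + y).
  have : (x - y) * (c1 + c2 * (x + y)) = 0.
    transitivity ((c0 + c1 * x + c2 * x ^+ 2) - (c0 + c1 * y + c2 * y ^+ 2)); first by ring.
    by rewrite qx qy subrr.
  move/eqP; rewrite mulf_eq0 subr_eq0 (negbTE x_neq_y) /= addr_eq0 => /eqP ->.
  by rewrite mulNr.
split=> //; apply/subr0_eq; rewrite -qx c1_eq; ring.
Qed.

Lemma pumpable_neg_roots (b b' : R) : evalR q b = 0 -> evalR q b' = 0 -> b != b' ->
  b < 0 -> b' < 0 -> pumpable b.
Proof.
move=> qb qb' b_neq_b' b_lt0 b'_lt0.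
have [c1_eq c0_eq] := vieta2 qb qb' b_neq_b'.
have q_neq0 : q != 0 by rewrite -size_poly_gt0 size_q.
have q2_neq0 : q`_2 != 0 by have := lead_coef_eq0 q; rewrite lead_coefE size_q => ->.
exists ((q`_2)%:P * q), 0, 1%N; split => //.
- move=> i; rewrite coefCM -(ler0z R) intrM.
  set c2 : R := (q`_2)%:~R in c1_eq c0_eq *.
  case: i => [|[|[|i]]].
  + have -> : c2 * (q`_0)%:~R = c2 ^+ 2 * (b * b') by rewrite c0_eq; ring.
    by rewrite mulr_ge0 ?sqr_ge0 // ltW // nmulr_rgt0.
  + have -> : c2 * (q`_1)%:~R = c2 ^+ 2 * - (b + b') by rewrite c1_eq; ring.
    by rewrite mulr_ge0 ?sqr_ge0 // oppr_ge0 ltW // ltr_nDl.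
  + by rewrite -expr2 sqr_ge0.
  by rewrite nth_default ?size_q // mulr0.
- by move=> i; rewrite coef0.
- by rewrite mulf_neq0 ?polyC_eq0.
- by rewrite evalRM qb mulr0 mulr0 add0r /evalR rmorph0 horner0.
Qed.

Lemma pumpable_small_conj (r s : R) : evalR q r = 0 -> evalR q s = 0 ->
  0 < r < 1 -> s < r -> s != 0 -> s ^+ 2 < r ^+ 2 -> pumpable r /\ pumpable s.
Proof.
move=> qr qs /andP[r_gt0 r_lt1] s_lt_r s_neq0 s2_lt_r2.
have s_lt1 : s < 1 := lt_trans s_lt_r r_lt1.
have c_gt0 : 0 < (1 - r) / (1 - s) by rewrite divr_gt0 // subr_gt0.
have [a Ta] := exists_even_expr_lt s2_lt_r2 c_gt0.
have T_gt0 : 0 < s ^+ (2 * a) by rewrite exprM exprn_gt0 // exprn_even_gt0.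
have key : s ^+ (2 * a) * (1 - s) < r ^+ (2 * a) * (1 - r).
  by move: Ta; rewrite mulrAC ltr_pdivlMr ?subr_gt0 // [(1 - r) * _]mulrC.
have sr1 : s < r < 1 by rewrite s_lt_r r_lt1.
have [lam [mu [lam_gt0 mu_gt0 id_r id_s]]] := small_conj_coefs sr1 T_gt0 key.
have T_lt_P : s ^+ (2 * a) < r ^+ (2 * a) by nra.
apply: (pumpable_of_conj_identity (G0 := 'X^(2 * a)) (j := 1) (i1 := 0) (i2 := 2 * a)
  (lam := lam) (mu := mu)) => //.
- by rewrite gt_eqF.
- exact: nonneg_polyXn.
- by rewrite -size_poly_gt0 size_polyXn.
- by rewrite !expr0 mul1r mulr1 lt_eqF.
by move=> b; rewrite !inE => /orP[]/eqP->; rewrite evalRXn expr0 mulr1 expr1.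
Qed.

Lemma pumpable_large_conj (r s : R) : evalR q r = 0 -> evalR q s = 0 ->
  0 < r < 1 -> s < r -> r ^+ 2 < s ^+ 2 -> pumpable r /\ pumpable s.
Proof.
move=> qr qs r01 s_lt_r r2_lt_s2; have /andP[r_gt0 r_lt1] := r01.
have s_lt0 : s < 0.
  rewrite ltNge; apply: contraTN r2_lt_s2 => s_ge0.
  by rewrite -leNgt; apply: lerXn2r; rewrite ?nnegrE //; exact: ltW.
have c_gt0 : 0 < (1 - r) / (1 - s) by rewrite divr_gt0 // subr_gt0 // (lt_trans s_lt_r).
have [a Pa] := exists_even_expr_lt r2_lt_s2 c_gt0.
have P_gt0 : 0 < r ^+ (2 * a) by rewrite exprn_gt0.
have T_gt0 : 0 < s ^+ (2 * a) by rewrite exprM exprn_gt0 // exprn_even_gt0 // (lt_eqF s_lt0).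
have key : r ^+ (2 * a) * (1 - s) < s ^+ (2 * a) * (1 - r).
  by move: Pa; rewrite mulrAC ltr_pdivlMr ?subr_gt0 ?(lt_trans s_lt_r) // [(1 - r) * _]mulrC.
have [lam [mu [lam_gt0 mu_gt0 id_r id_s]]] := large_conj_coefs r01 s_lt0 P_gt0 T_gt0 key.
apply: (pumpable_of_conj_identity (G0 := 1) (j := 1) (i1 := 2 * a) (i2 := (2 * a).+1)
  (lam := lam) (mu := mu)) => //.
- by rewrite gt_eqF.
- by rewrite -polyC1; apply: nonneg_polyC.
- exact: oner_neq0.
- rewrite !exprS -subr_eq0.
  have -> : r ^+ (2 * a) * (s * s ^+ (2 * a)) - r * r ^+ (2 * a) * s ^+ (2 * a)
      = r ^+ (2 * a) * s ^+ (2 * a) * (s - r) by ring.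
  by rewrite !mulf_eq0 subr_eq0 (gt_eqF P_gt0) (gt_eqF T_gt0) (lt_eqF s_lt_r).
by move=> b; rewrite !inE => /orP[]/eqP->; rewrite evalR1 mul1r expr1 exprS ?id_r ?id_s; ring.
Qed.

Lemma pumpable_opposite_conj (r : R) : evalR q r = 0 -> evalR q (- r) = 0 ->
  0 < r < 1 -> pumpable r /\ pumpable (- r).
Proof.
move=> qr qNr /andP[r_gt0 r_lt1].
have lam_gt0 : 0 < 1 - r ^+ 2 by rewrite subr_gt0 expr_lt1 // ltW.
apply: (pumpable_of_conj_identity (G0 := 1 + 'X) (j := 2) (i1 := 0) (i2 := 1)
  (lam := 1 - r ^+ 2) (mu := 1 - r ^+ 2)) => //.
- by rewrite -subr_eq0 opprK (gt_eqF (addr_gt0 r_gt0 r_gt0)).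
- by apply: nonneg_polyD; [rewrite -polyC1; apply: nonneg_polyC | exact: (nonneg_polyXn 1)].
- by rewrite -size_poly_gt0 addrC -polyC1 size_XaddC.
- by rewrite !expr0 !expr1 mul1r mulr1 eq_sym -subr_eq0 opprK (gt_eqF (addr_gt0 r_gt0 r_gt0)).
by move=> b; rewrite !inE => /orP[]/eqP->; rewrite !evalRE; ring.
Qed.

Lemma pumpable_pos_root (r s : R) : evalR q r = 0 -> evalR q s = 0 ->
  0 < r < 1 -> s < r -> pumpable r /\ pumpable s.
Proof.
move=> qr qs r01 s_lt_r.
have [s2_lt|r2_lt|sr2] := ltgtP (s ^+ 2) (r ^+ 2).
- exact: pumpable_small_conj (root_neq0 qs) s2_lt.
- exact: pumpable_large_conj.
have s_eqNr : s = - r.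
  have : (s - r) * (s + r) = 0 by rewrite -subr_sqr sr2 subrr.
  by move/eqP; rewrite mulf_eq0 subr_eq0 (lt_eqF s_lt_r) addr_eq0 => /eqP.
by rewrite s_eqNr in qs *; exact: pumpable_opposite_conj.
Qed.

Lemma pumpable_root_lt1 (b b' : R) : evalR q b = 0 -> evalR q b' = 0 -> b != b' ->
  b < 1 -> b' < 1 -> pumpable b.
Proof.
move=> qb qb' b_neq_b' b_lt1 b'_lt1.
have [b_lt0|b_ge0] := ltP b 0.
  have [b'_lt0|b'_ge0] := ltP b' 0; first exact: pumpable_neg_roots b_lt0 b'_lt0.
  have b'01 : 0 < b' < 1 by rewrite lt_def (root_neq0 qb') b'_ge0.
  by have [] := pumpable_pos_root qb' qb b'01 (lt_le_trans b_lt0 b'_ge0).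
have b01 : 0 < b < 1 by rewrite lt_def (root_neq0 qb) b_ge0.
have [b'_lt_b|b_le_b'] := ltP b' b; first by have [] := pumpable_pos_root qb qb' b01 b'_lt_b.
have b_lt_b' : b < b' by rewrite lt_neqAle b_neq_b'.
have b'01 : 0 < b' < 1 by rewrite b'_lt1 andbT (lt_trans _ b_lt_b') //; case/andP: b01.
by have [] := pumpable_pos_root qb' qb b'01 b_lt_b'.
Qed.

End Conjugates.

Theorem theorem1 (R : realType) (q : {poly int}) (beta beta' : R) :
  size q = 3%N ->
  irreducible_poly (map_poly (fun z : int => z%:~R) q : {poly rat}) ->
  evalR q beta = 0 -> evalR q beta' = 0 -> beta' != beta ->
  ((forall alpha : R, partition_finite beta alpha) <-> (1 < beta \/ 1 < beta')).
Proof.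
move=> size_q q_irr qb qb' b'_neq_b; split => [all_finite|[b_gt1|b'_gt1] alpha].
- have [b_gt1|b_le1] := ltP 1 beta; first by left.
  have [b'_gt1|b'_le1] := ltP 1 beta'; first by right.
  have b_lt1 : beta < 1 by rewrite lt_neqAle (root_neq1 size_q q_irr qb).
  have b'_lt1 : beta' < 1 by rewrite lt_neqAle (root_neq1 size_q q_irr qb').
  have b_neq_b' : beta != beta' by rewrite eq_sym.
  have [alpha not_finite] := pumpable_partition_infinite
    (pumpable_root_lt1 size_q q_irr qb qb' b_neq_b' b_lt1 b'_lt1).
  by case: (not_finite (all_finite alpha)).
- exact: partition_finite_gt1.
- by apply: (partition_finite_conj size_q q_irr alpha qb qb') => a; apply: partition_finite_gt1.
Qed.
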